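(* Consider the cubic ($p=3$) Gauss–Lobatto element on $[-1,1]$ and real constants $\bar\varepsilon_1,\bar\varepsilon_2,\bar\varepsilon_3$. Define the artificial dissipation matrix $$\mathcal{D}_{AD}=\bar\varepsilon_1(\mathcal{D}_x)^T\mathcal{P}\mathcal{D}_x+\bar\varepsilon_2(\mathcal{D}_x^2)^T\mathcal{P}\mathcal{D}_x^2+\bar\varepsilon_3(\mathcal{D}_x^3)^T\mathcal{P}\mathcal{D}_x^3\in\mathbb{R}^{4\times4}.$$ If $$\bar\varepsilon_1>0,\qquad\bar\varepsilon_2\ge-\frac{\bar\varepsilon_1}{3},\qquad\bar\varepsilon_3\ge-\frac{\bar\varepsilon_1}{45}-\frac{\bar\varepsilon_2}{3},$$ then $\mathcal{D}_{AD}$ is positive semi-definite.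
   Context: For $p=3$ on $[-1,1]$ the Gauss–Lobatto nodes are $-1,-1/\sqrt5,1/\sqrt5,1$ with weights $1/6,5/6,5/6,1/6$; $\mathcal{P}$ is the diagonal matrix of these weights; $\ell_0,\dots,\ell_3$ are the cubic Lagrange basis polynomials on these nodes; $\mathcal{D}_x$ is the $4\times4$ matrix with $(\mathcal{D}_x)_{kj}=\ell_j'(x_k)$, and $\mathcal{D}_x^i$ denotes its $i$-th power, whose $(k,j)$ entry is $\ell_j^{(i)}(x_k)$. *)

From mathcomp Require Import all_boot all_order all_algebra.
Set Implicit Arguments. Unset Strict Implicit. Unset Printing Implicit Defensive.
Import Order.TTheory GRing.Theory Num.Theory.
Local Open Scope ring_scope.

Definition gl_node (R : rcfType) (k : 'I_4) : R :=
  match val k with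
  | 0 => -1
  | 1 => - (Num.sqrt 5)^-1
  | 2 => (Num.sqrt 5)^-1
  | _ => 1
  end.

Definition gl_weight (R : rcfType) (k : 'I_4) : R :=
  match val k with
  | 0 => 6^-1
  | 1 => 5 / 6
  | 2 => 5 / 6
  | _ => 6^-1
  end.

Definition gl_P (R : rcfType) : 'M[R]_4 := \matrix_(i, j) (if i == j then gl_weight R i else 0).

Definition lagrange (R : rcfType) (j : 'I_4) : {poly R} :=
  \prod_(m < 4 | m != j) ((gl_node R j - gl_node R m)^-1 *: ('X - (gl_node R m)%:P)).

Definition gl_Dx (R : rcfType) : 'M[R]_4 :=
  \matrix_(k, j) ((lagrange R j)^`()).[gl_node R k].

Definition D_AD (R : rcfType) (e1 e2 e3 : R) : 'M[R]_4 :=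
  e1 *: ((gl_Dx R)^T *m gl_P R *m gl_Dx R)
  + e2 *: (((gl_Dx R) ^+ 2)^T *m gl_P R *m (gl_Dx R) ^+ 2)
  + e3 *: (((gl_Dx R) ^+ 3)^T *m gl_P R *m (gl_Dx R) ^+ 3).

Definition psd (R : rcfType) (n : nat) (A : 'M[R]_n) : Prop :=
  forall v : 'cV[R]_n, 0 <= ((v^T *m A *m v) 0 0).

From mathcomp Require Import all_boot all_order all_algebra.
From mathcomp Require Import ring lra.
Import Order.TTheory GRing.Theory Num.Theory.
Set Implicit Arguments. Unset Strict Implicit. Unset Printing Implicit Defensive.
Local Open Scope ring_scope.

(* The matrix D_x^i maps the nodal values of a cubic q to those of q^(i), so
   v^T (D_x^i)^T P D_x^i v is the Gauss-Lobatto quadrature of (q^(i))^2, where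
   q interpolates v.  The four-point rule is exact up to degree 5, hence
   v^T D_AD v = e1 int (q')^2 + e2 int (q'')^2 + e3 int (q''')^2 over [-1,1].
   In the coefficients c_i of q this is
   2 e1 (c1 + c3)^2 + (8/3 e1 + 8 e2) c2^2 + (8/5 e1 + 24 e2 + 72 e3) c3^2,
   and the hypotheses make all three weights nonnegative. *)

Lemma size_derivn_leq (R : nzRingType) i (q : {poly R}) :
  (size q^`(i) <= size q)%N.
Proof.
elim: i => [|i IHi]; first by rewrite derivn0.
by rewrite derivnS (leq_trans (size_poly _ _)) // (leq_trans (leq_pred _)).
Qed.

Section LagrangeInterpolation.
Variables (F : fieldType) (n : nat) (x : 'I_n -> F).
Hypothesis x_inj : injective x.

Definition lagrange_basis (j : 'I_n) : {poly F} :=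
  \prod_(m < n | m != j) ((x j - x m)^-1 *: ('X - (x m)%:P)).

Definition nodal_values (q : {poly F}) : 'cV[F]_n := \col_k q.[x k].

Definition interpolant (v : 'cV[F]_n) : {poly F} :=
  \sum_j v j 0 *: lagrange_basis j.

Definition diff_mx : 'M[F]_n := \matrix_(k, j) (lagrange_basis j)^`().[x k].

Lemma size_lagrange_basis j : (size (lagrange_basis j) <= n)%N.
Proof.
rewrite /lagrange_basis scaler_prod (leq_trans (size_scale_leq _ _)) //.
rewrite -big_filter size_prod_XsubC size_filter.
rewrite -sum1_count sum1_card cardC1 card_ord.
by case: n j => [[]|].
Qed.

Lemma lagrange_basis_node j k : (lagrange_basis j).[x k] = (k == j)%:R.
Proof.
rewrite horner_prod; have [-> | neq_kj] := eqVneq k j.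
  apply: big1 => m neq_mj; rewrite hornerZ hornerXsubC mulVf //.
  by rewrite subr_eq0 (inj_eq x_inj) eq_sym.
by rewrite (bigD1 k) //= hornerZ hornerXsubC subrr mulr0 mul0r.
Qed.

Lemma size_interpolant v : (size (interpolant v) <= n)%N.
Proof.
apply: (big_ind (fun p : {poly F} => size p <= n)%N) => [|p r sp sr|j _].
- by rewrite size_poly0.
- by rewrite (leq_trans (size_polyD _ _)) // geq_max sp.
- exact: leq_trans (size_scale_leq _ _) (size_lagrange_basis j).
Qed.

Lemma interpolantK : cancel interpolant nodal_values.
Proof.
move=> v; apply/matrixP => k i; rewrite ord1 mxE horner_sum (bigD1 k) //=.
rewrite big1 => [|j neq_jk]; rewrite hornerZ lagrange_basis_node.
  by rewrite eqxx mulr1 addr0.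
by rewrite eq_sym (negPf neq_jk) mulr0.
Qed.

Lemma nodal_valuesK (q : {poly F}) :
  (size q <= n)%N -> interpolant (nodal_values q) = q.
Proof.
move=> sq; apply/eqP; rewrite -subr_eq0; apply/eqP.
apply: (@roots_geq_poly_eq0 _ _ [seq x k | k <- enum 'I_n]).
- apply/allP => _ /mapP[k _ ->]; apply/rootP; rewrite hornerD hornerN.
  have := congr1 (fun w : 'cV_n => w k 0) (interpolantK (nodal_values q)).
  by rewrite !mxE => ->; rewrite subrr.
- by rewrite (map_inj_uniq x_inj) enum_uniq.
- rewrite size_map size_enum_ord (leq_trans (size_polyD _ _)) //.
  by rewrite geq_max size_polyN size_interpolant sq.
Qed.

Lemma diff_mx_nodal (q : {poly F}) :
  (size q <= n)%N -> diff_mx *m nodal_values q = nodal_values q^`().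
Proof.
move=> sq; apply/matrixP => k i; rewrite ord1 !mxE -{2}(nodal_valuesK sq).
rewrite linear_sum horner_sum; apply: eq_bigr => j _.
by rewrite !mxE linearZ hornerZ mulrC.
Qed.

Lemma diff_mxX_nodal i (q : {poly F}) :
  (size q <= n)%N -> diff_mx ^+ i *m nodal_values q = nodal_values q^`(i).
Proof.
move=> sq; elim: i => [|i IHi]; first by rewrite expr0 mul1mx derivn0.
rewrite exprS -mulmxE -mulmxA IHi derivnS diff_mx_nodal //.
exact: leq_trans (size_derivn_leq _ _) sq.
Qed.

End LagrangeInterpolation.

Section QuadraticForms.
Variables (R : comNzRingType) (n : nat).

Lemma mx_quadD (A B : 'M[R]_n) (v : 'cV_n) :
  (v^T *m (A + B) *m v) 0 0 = (v^T *m A *m v) 0 0 + (v^T *m B *m v) 0 0.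
Proof. by rewrite mulmxDr mulmxDl mxE. Qed.

Lemma mx_quadZ (a : R) (A : 'M[R]_n) (v : 'cV_n) :
  (v^T *m (a *: A) *m v) 0 0 = a * (v^T *m A *m v) 0 0.
Proof. by rewrite -scalemxAr -scalemxAl mxE. Qed.

Lemma mx_quad_weighted (w : 'I_n -> R) (M : 'M[R]_n) (v : 'cV_n) :
  (v^T *m (M^T *m \matrix_(i, j) (if i == j then w i else 0) *m M) *m v) 0 0
  = \sum_k w k * ((M *m v) k 0) ^+ 2.
Proof.
rewrite !mulmxA -trmx_mul -mulmxA mxE; apply: eq_bigr => k _.
rewrite !mxE (bigD1 k) //= big1 => [|i neq_ik].
  by rewrite !mxE eqxx addr0 mulrAC -expr2 mulrC.
by rewrite !mxE (negPf neq_ik) mulr0.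
Qed.

End QuadraticForms.

Section GaussLobatto.
Variable R : rcfType.
Local Notation t := (Num.sqrt (5 : R))^-1.

Lemma gl_inner_node_sqr : t ^+ 2 = 5^-1.
Proof. by rewrite exprVn sqr_sqrtr // ler0n. Qed.

Lemma gl_inner_node_bounds : 0 < t < 1.
Proof.
have sqrt5_gt0 : 0 < Num.sqrt (5 : R) by rewrite sqrtr_gt0 ltr0n.
rewrite invr_gt0 sqrt5_gt0 invf_lt1 //=.
by rewrite -[X in X < _]sqrtr1 ltr_sqrt ?ltr0n ?ltr1n.
Qed.

Lemma gl_node_inj : injective (gl_node R).
Proof.
have /andP[t_gt0 t_lt1] := gl_inner_node_bounds.
move=> [[|[|[|[|i]]]] Hi] [[|[|[|[|j]]]] Hj] //; rewrite /gl_node /= => eq_ij;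
  by [apply: val_inj | exfalso; lra].
Qed.

Lemma gl_quadratureE (f : R -> R) :
  \sum_k gl_weight R k * f (gl_node R k)
  = 6^-1 * (f (-1) + f 1) + 5 / 6 * (f (- t) + f t).
Proof. by rewrite !big_ord_recr big_ord0 /gl_weight /gl_node /=; ring. Qed.

Lemma gl_quadrature_sqr (a b c : R) :
  \sum_k gl_weight R k * (a + b * gl_node R k + c * gl_node R k ^+ 2) ^+ 2
  = 2 * a ^+ 2 + 2 / 3 * b ^+ 2 + 2 / 5 * c ^+ 2 + 4 / 3 * a * c.
Proof.
have even y : (a + b * - y + c * (- y) ^+ 2) ^+ 2 + (a + b * y + c * y ^+ 2) ^+ 2
    = 2 * (a + c * y ^+ 2) ^+ 2 + 2 * b ^+ 2 * y ^+ 2 by ring.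
rewrite (gl_quadratureE (fun y => (a + b * y + c * y ^+ 2) ^+ 2)) /=.
by rewrite !even gl_inner_node_sqr expr1n; field.
Qed.

Lemma horner_deriv_cubic (q : {poly R}) y : (size q <= 4)%N ->
  q^`().[y] = q`_1 + q`_2 *+ 2 * y + q`_3 *+ 3 * y ^+ 2.
Proof.
move=> sq; have sq' : (size q^`() <= 4)%N := leq_trans (size_derivn_leq 1 q) sq.
rewrite (horner_coef_wide y sq') !big_ord_recr big_ord0 !coef_deriv /=.
by rewrite [q`_4]nth_default //; ring.
Qed.

Lemma gl_quadrature_derivn (q : {poly R}) : (size q <= 4)%N ->
  [/\ \sum_k gl_weight R k * q^`().[gl_node R k] ^+ 2
        = 2 * q`_1 ^+ 2 + 4 * q`_1 * q`_3 + 8 / 3 * q`_2 ^+ 2 + 18 / 5 * q`_3 ^+ 2,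
      \sum_k gl_weight R k * q^`(2).[gl_node R k] ^+ 2 = 8 * q`_2 ^+ 2 + 24 * q`_3 ^+ 2
    & \sum_k gl_weight R k * q^`(3).[gl_node R k] ^+ 2 = 72 * q`_3 ^+ 2].
Proof.
move=> sq; have [q4 q5] : q`_4 = 0 /\ q`_5 = 0 by rewrite !nth_default // (leq_trans sq).
have sq1 : (size q^`() <= 4)%N := leq_trans (size_derivn_leq 1 q) sq.
have sq2 : (size q^`()^`() <= 4)%N := leq_trans (size_derivn_leq 2 q) sq.
split.
- under eq_bigr do rewrite horner_deriv_cubic //.
  by rewrite gl_quadrature_sqr; field.
- under eq_bigr do
    rewrite derivnS derivn1 (horner_deriv_cubic _ sq1) !coef_deriv q4 mul0rn.
  by rewrite gl_quadrature_sqr; field.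
- under eq_bigr do rewrite derivnS derivnS derivn1 (horner_deriv_cubic _ sq2)
    !coef_deriv q4 q5 !mul0rn.
  by rewrite gl_quadrature_sqr; field.
Qed.

Lemma gl_DxE : gl_Dx R = diff_mx (gl_node R).
Proof. by []. Qed.

Lemma gl_Dx_quad i (v : 'cV[R]_4) :
  (v^T *m ((gl_Dx R ^+ i)^T *m gl_P R *m gl_Dx R ^+ i) *m v) 0 0
  = \sum_k gl_weight R k * (interpolant (gl_node R) v)^`(i).[gl_node R k] ^+ 2.
Proof.
rewrite /gl_P mx_quad_weighted gl_DxE -[v in _ *m v](interpolantK gl_node_inj).
rewrite (diff_mxX_nodal gl_node_inj) ?size_interpolant //.
by apply: eq_bigr => k _; rewrite mxE.
Qed.

End GaussLobatto.

Lemma dissipation_form_ge0 (R : realFieldType) (e1 e2 e3 c1 c2 c3 : R) :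
  0 < e1 -> - (e1 / 3) <= e2 -> - (e1 / 45) - e2 / 3 <= e3 ->
  0 <= e1 * (2 * c1 ^+ 2 + 4 * c1 * c3 + 8 / 3 * c2 ^+ 2 + 18 / 5 * c3 ^+ 2)
       + e2 * (8 * c2 ^+ 2 + 24 * c3 ^+ 2) + e3 * (72 * c3 ^+ 2).
Proof.
move=> e1_gt0 e2_ge e3_ge.
have -> : e1 * (2 * c1 ^+ 2 + 4 * c1 * c3 + 8 / 3 * c2 ^+ 2 + 18 / 5 * c3 ^+ 2)
       + e2 * (8 * c2 ^+ 2 + 24 * c3 ^+ 2) + e3 * (72 * c3 ^+ 2)
    = 2 * e1 * (c1 + c3) ^+ 2 + (8 / 3 * e1 + 8 * e2) * c2 ^+ 2
      + (8 / 5 * e1 + 24 * e2 + 72 * e3) * c3 ^+ 2 by field.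
by rewrite !addr_ge0 // mulr_ge0 ?sqr_ge0 //; lra.
Qed.

Theorem proposition6 (R : rcfType) (e1 e2 e3 : R) :
  0 < e1 -> - (e1 / 3) <= e2 -> - (e1 / 45) - e2 / 3 <= e3 ->
  psd (D_AD e1 e2 e3).
Proof.
move=> e1_gt0 e2_ge e3_ge v.
have [Q1 Q2 Q3] := gl_quadrature_derivn (size_interpolant (gl_node R) v).
rewrite /D_AD !mx_quadD !mx_quadZ (gl_Dx_quad 1) !gl_Dx_quad derivn1 Q1 Q2 Q3.
exact: dissipation_form_ge0.
Qed.
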